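(* Let $L=\mathcal{F}(P)$ be a finite distributive lattice and let $K=[\hat0_K,\hat1_K]$ be a cutting of $L$. Then $$R(L\boxplus K,x)=R_L({\downarrow K},x)+x\,R_L({\uparrow K},x)=R({\downarrow K},x)+x^{h_L(\hat0_K)+1}R({\uparrow K},x).$$
   Context: For a finite poset $P$, $\mathcal{F}(P)$ is the set of filters (up-sets) of $P$ ordered by reverse inclusion; it is a finite distributive lattice with least element $P$ and greatest element $\emptyset$. A cutting of a finite distributive lattice $L$ is an interval $K=[\hat0_K,\hat1_K]$ of $L$ such that every maximal chain of $L$ meets $K$. For a cutting $K$ of $L=\mathcal{F}(P)$, let $S=\hat0_K\setminus\hat1_K$, $S_0$ the set of maximal elements of $P\setminus\hat0_K$, $S_1$ the set of minimal elements of $\hat1_K$. The poset $P_K$ is $P\cup\{x_K\}$ ($x_K$ new) where the order on $P$ is unchanged, $z<x_K$ iff $z\le s$ for some $s\in S_0$, $x_K<y$ iff $y\ge s$ for some $s\in S_1$, and $x_K$ is incomparable to every element of $S$. The convex expansion is $L\boxplus K:=\mathcal{F}(P_K)$. For a finite distributive lattice $M$ and $a\in M$, $h_M(a)$ is the height of $a$ (length of any maximal chain from the least element of $M$ to $a$). For $A\subseteq L$, $R_L(A,x)=\sum_{a\in A}x^{h_L(a)}$, and for a lattice $M$, $R(M,x)=R_M(M,x)=\sum_{a\in M}x^{h_M(a)}$ (rank generating function). Here ${\downarrow K}=\{a\in L: a\le\hat1_K\}$ and ${\uparrow K}=\{a\in L:a\ge\hat0_K\}$, regarded as lattices in their own right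 in $R({\downarrow K},x)$, $R({\uparrow K},x)$. *)

From HB Require Import structures.
From mathcomp Require Import all_boot all_order all_algebra.
Set Implicit Arguments. Unset Strict Implicit. Unset Printing Implicit Defensive.
Import Order.TTheory GRing.Theory.

Section Defs.
Variable U : finType.

Definition upsetb (r : rel U) (A : {set U}) : bool :=
  [forall x in A, forall y, r x y ==> (y \in A)].

(* Lattices of filters are ordered by REVERSE inclusion: X < Y iff Y \proper X.
   [chainb F b a k]: there is a strictly increasing chain (in reverse
   inclusion) b < t_1 < ... < t_k = a of length k with all t_i in F. *)
Definition chainb (F : pred {set U}) (b a : {set U}) (k : nat) : bool :=
  [exists t : k.-tuple {set U},
     [&& path (fun X Y : {set U} => Y \proper X) b t,
         last b t == a & all F t]].

(* Height of a above the base element b inside the family F: the maximal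
   length of a chain from b to a in F (a strict chain of subsets of U has
   length at most #|U|). *)
Definition height (F : pred {set U}) (b a : {set U}) : nat :=
  \max_(k < #|U|.+1 | chainb F b a k) k.

Definition rgf (F : pred {set U}) (b : {set U}) (A : pred {set U}) : {poly int} :=
  \sum_(a : {set U} | A a) 'X^(height F b a).

Definition is_chain (F : pred {set U}) (C : {set {set U}}) : Prop :=
  (forall X, X \in C -> F X) /\
  (forall X Y, X \in C -> Y \in C -> (X \subset Y) || (Y \subset X)).

Definition is_maximal_chain (F : pred {set U}) (C : {set {set U}}) : Prop :=
  is_chain F C /\ (forall C', is_chain F C' -> C \subset C' -> C' = C).
End Defs.

Section Poset.
Variables (d : Order.disp_t) (T : finPOrderType d).

Definition filters : pred {set T} := fun A => upsetb (fun x y : T => (x <= y)%O) A.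

(* the interval [o, i] of L (reverse inclusion): o <= X <= i iff i ⊆ X ⊆ o *)
Definition in_interval (o i X : {set T}) : bool := (i \subset X) && (X \subset o).

Definition is_cutting (o i : {set T}) : Prop :=
  filters o /\ filters i /\ i \subset o /\
  forall C, is_maximal_chain filters C -> exists2 X, X \in C & in_interval o i X.

Definition S0 (o : {set T}) : {set T} :=
  [set s | (s \notin o) && [forall z, ((s < z)%O && (z \notin o)) ==> false]].
Definition S1 (i : {set T}) : {set T} :=
  [set s | (s \in i) && [forall z, ((z < s)%O && (z \in i)) ==> false]].

(* The order of P_K on option T, None being the new element x_K. *)
Definition leK (o i : {set T}) (u v : option T) : bool :=
  match u, v with
  | Some a, Some b => (a <= b)%O
  | Some z, None => [exists s in S0 o, (z <= s)%O]
  | None, Some y => [exists s in S1 i, (s <= y)%O]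
  | None, None => true
  end.

(* L ⊞ K = F(P_K) *)
Definition filtersK (o i : {set T}) : pred {set option T} :=
  fun A => upsetb (leK o i) A.

Definition downK (i : {set T}) : pred {set T} := fun a => filters a && (i \subset a).
Definition upK (o : {set T}) : pred {set T} := fun a => filters a && (a \subset o).
End Poset.
Arguments filters {d} T.

(* A filter of P_K either contains x_K, and then its trace on P is a filter
   of P containing 1_K (everything above S1 lies above x_K), or it does not,
   and then its trace is a filter of P contained in 0_K (everything outside
   0_K lies below S0, hence below x_K).  In each lattice of filters involved,
   a proper subfilter X of B can be enlarged inside B by one element (an
   f-maximal element of B minus X, for f strictly increasing along the
   order), so heights are differences of cardinalities, and the trace map
   shifts heights by 0 on the first kind of filters and by 1 on the second. *)
From mathcomp Require Import all_boot all_order all_algebra zify.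
Set Implicit Arguments. Unset Strict Implicit. Unset Printing Implicit Defensive.
Import Order.TTheory GRing.Theory.

Section SetFamilies.
Variable U : finType.
Implicit Types (r : rel U) (F : pred {set U}) (A B a b c X : {set U}).

Lemma upsetP r A : reflect (forall x y, x \in A -> r x y -> y \in A) (upsetb r A).
Proof.
apply: (iffP forallP) => [upA x y xA rxy | upA x].
- by move: (upA x); rewrite xA => /forallP/(_ y); rewrite rxy.
- by apply/implyP => xA; apply/forallP => y; apply/implyP; apply: upA.
Qed.

Lemma upsetT r : upsetb r setT.
Proof. by apply/upsetP => x y; rewrite !inE. Qed.

Lemma chainbP F b a k :
  reflect (exists s : seq {set U}, [/\ size s = k,
     path (fun X Y : {set U} => Y \proper X) b s, last b s = a & all F s])
  (chainb F b a k).
Proof.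
apply: (iffP existsP) => [[t /and3P [p /eqP l Ft]] | [s [sz p l Fs]]].
- by exists (val t); split=> //; apply: size_tuple.
- have sz_k : size s == k by rewrite sz.
  by exists (Tuple sz_k); rewrite /= p l eqxx Fs.
Qed.

Lemma chainb_card F b a k : chainb F b a k -> #|a| + k <= #|b|.
Proof.
case/chainbP => s [<- p <- _]; elim: s b p => [|x s IHs] b /=; first by rewrite addn0.
by case/andP => /proper_card ltxb /IHs; lia.
Qed.

Section GradedFamily.
Variables (F : pred {set U}) (b : {set U}).
Hypothesis F_extend1 :
  forall X, F X -> X \proper b -> exists2 x, x \in b :\: X & F (x |: X).

Lemma chainb_graded a : F a -> a \subset b -> chainb F b a (#|b| - #|a|).
Proof.
move dn: (#|b| - #|a|) => n; elim: n a dn => [|n IHn] a dn Fa sab.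
  have /eqP -> : a == b by rewrite eqEcard sab /=; lia.
  by apply/chainbP; exists [::]; split.
have [|x /setDP [xb xa] Fxa] := F_extend1 Fa; first by rewrite properEcard sab /=; lia.
have card_xa : #|x |: a| = #|a|.+1 by rewrite cardsU1 xa.
have sxab : x |: a \subset b by rewrite subUset sub1set xb sab.
case/chainbP: (IHn (x |: a) ltac:(lia) Fxa sxab) => s [sz p l Fs].
apply/chainbP; exists (rcons s a); split.
- by rewrite size_rcons sz.
- by rewrite rcons_path p l /= properEcard subsetUr card_xa ltnSn andbT.
- by rewrite last_rcons.
- by rewrite all_rcons Fa Fs.
Qed.

Lemma height_graded a : F a -> a \subset b -> height F b a = #|b| - #|a|.
Proof.
move=> Fa sab; apply/anti_leq/andP; split.
  by apply/bigmax_leqP => k /chainb_card; lia.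
have lt_n : #|b| - #|a| < #|U|.+1 by have := max_card b; lia.
exact: (bigop.bigmax_sup (Ordinal lt_n) (chainb_graded Fa sab)).
Qed.

End GradedFamily.

Section StrictlyMonotone.
Variables (r : rel U) (f : U -> nat).
Hypothesis f_strict : forall x y, r x y -> x != y -> f x < f y.

Lemma upset_extend1 b X : upsetb r b -> upsetb r X -> X \proper b ->
  exists2 x, x \in b :\: X & upsetb r (x |: X).
Proof.
move=> /upsetP upb /upsetP upX /properP [_ [x0 x0b x0X]].
have /(arg_maxnP f) [x /setDP [xb xX] xmax] : x0 \in b :\: X by rewrite inE x0X.
exists x; first by rewrite inE xX.
apply/upsetP => z y /setU1P [->|zX] rxy; rewrite in_setU1; last first.
  by rewrite (upX _ _ zX rxy) orbT.
have [//|nyx] /= := eqVneq y x; apply/negPn/negP => yX.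
have ybX : y \in b :\: X by rewrite inE yX (upb _ _ xb rxy).
have := xmax _ ybX; have := f_strict rxy; rewrite eq_sym nyx => /(_ isT); lia.
Qed.

Lemma height_upsets (F : pred {set U}) b c :
  upsetb r b -> (forall X, F X = [&& upsetb r X, c \subset X & X \subset b]) ->
  forall A, F A -> height F b A = #|b| - #|A|.
Proof.
move=> upb FE A FA; apply: height_graded => //; last by move: FA; rewrite FE => /and3P [].
move=> X; rewrite FE => /and3P [upX scX _] ltXb.
have [x xbX upxX] := upset_extend1 upb upX ltXb.
exists x; rewrite // FE upxX (subset_trans scX (subsetUr _ _)) subUset sub1set.
by move: xbX ltXb => /setDP [-> _] /proper_sub ->.
Qed.

End StrictlyMonotone.

Lemma mem_Some B x : (Some x \in Some @: B) = (x \in B).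
Proof. exact: mem_imset Some_inj. Qed.

Lemma None_notin_Some B : None \notin Some @: B.
Proof. by apply/imsetP => -[]. Qed.

Lemma card_Some B : #|Some @: B| = #|B|.
Proof. exact: card_imset Some_inj. Qed.

Lemma card_None_Some B : #|None |: Some @: B| = #|B|.+1.
Proof. by rewrite cardsU1 card_Some None_notin_Some. Qed.

Lemma reindex_optset_None (R : nmodType) (P : pred {set option U})
    (G : {set option U} -> R) :
  (\sum_(A | P A && (None \in A)) G A
    = \sum_(B : {set U} | P (None |: Some @: B)) G (None |: Some @: B))%R.
Proof.
rewrite (reindex_onto (fun B : {set U} => None |: Some @: B)
                      (fun A : {set option U} => Some @^-1: A)) /=.
  apply: eq_bigl => B; rewrite setU11 andbT.
  have -> : Some @^-1: (None |: Some @: B) = B.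
    by apply/setP => x; rewrite !inE mem_Some.
  by rewrite eqxx andbT.
move=> A /andP [_ NA]; apply/setP => -[x|]; rewrite in_setU1 //=.
by rewrite mem_Some inE.
Qed.

Lemma reindex_optset_Some (R : nmodType) (P : pred {set option U})
    (G : {set option U} -> R) :
  (\sum_(A | P A && (None \notin A)) G A = \sum_(B : {set U} | P (Some @: B)) G (Some @: B))%R.
Proof.
rewrite (reindex_onto (fun B : {set U} => Some @: B)
                      (fun A : {set option U} => Some @^-1: A)) /=.
  apply: eq_bigl => B; rewrite None_notin_Some andbT.
  have -> : Some @^-1: (Some @: B) = B by apply/setP => x; rewrite !inE mem_Some.
  by rewrite eqxx andbT.
move=> A /andP [_ NA]; apply/setP => -[x|]; first by rewrite mem_Some inE.
by rewrite (negbTE NA) (negbTE (None_notin_Some _)).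
Qed.

End SetFamilies.

Section FiltersOfPoset.
Variables (d : Order.disp_t) (T : finPOrderType d).
Implicit Types (o i B : {set T}).

Definition strict_lower_card (x : T) := #|[set z : T | (z < x)%O]|.

Lemma strict_lower_card_lt (x y : T) :
  (x < y)%O -> strict_lower_card x < strict_lower_card y.
Proof.
move=> lt_xy; apply/proper_card/properP; split.
- by apply/subsetP => z; rewrite !inE => /lt_trans; apply.
- by exists x; rewrite !inE ?lt_xy ?ltxx.
Qed.

Lemma strict_lower_card_strict (x y : T) :
  (x <= y)%O -> x != y -> strict_lower_card x < strict_lower_card y.
Proof. by move=> le_xy nxy; apply: strict_lower_card_lt; rewrite lt_neqAle nxy. Qed.

Lemma height_filters B : filters T B -> height (filters T) setT B = #|T| - #|B|.
Proof.
rewrite -cardsT; apply: (height_upsets strict_lower_card_strict (c := set0)).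
  exact: upsetT.
by move=> X; rewrite sub0set subsetT !andbT.
Qed.

Lemma height_downK i B : downK i B -> height (downK i) setT B = height (filters T) setT B.
Proof.
move=> dB; have /andP [fB _] := dB; rewrite height_filters // -cardsT.
apply: (height_upsets strict_lower_card_strict (c := i)) dB; first exact: upsetT.
by move=> X; rewrite subsetT !andbT.
Qed.

Lemma height_upK o B : filters T o -> upK o B ->
  height (filters T) setT B = height (filters T) setT o + height (upK o) o B.
Proof.
move=> fo uB; have /andP [fB sBo] := uB; rewrite !height_filters //.
rewrite (height_upsets strict_lower_card_strict fo (c := set0)) //; last first.
  by move=> X; rewrite sub0set.
by rewrite addnBA ?subset_leq_card // subnK ?max_card.
Qed.

Lemma S0_ge o a : a \notin o -> exists2 s, s \in S0 o & (a <= s)%O.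
Proof.
move=> ao; pose P s := (s \notin o) && (a <= s)%O.
have /(arg_maxnP strict_lower_card) [s /andP [so le_as] smax] : P a by rewrite /P ao lexx.
exists s => //; rewrite inE so; apply/forallP => z; apply/implyP => /andP [lt_sz zo].
have := smax z; rewrite /P zo (le_trans le_as (ltW lt_sz)) => /(_ isT).
by have := strict_lower_card_lt lt_sz; lia.
Qed.

Lemma S1_le i b : b \in i -> exists2 s, s \in S1 i & (s <= b)%O.
Proof.
move=> bi; pose P s := (s \in i) && (s <= b)%O.
have /(arg_minnP strict_lower_card) [s /andP [si le_sb] smin] : P b by rewrite /P bi lexx.
exists s => //; rewrite inE si; apply/forallP => z; apply/implyP => /andP [lt_zs zi].
have := smin z; rewrite /P zi (le_trans (ltW lt_zs) le_sb) => /(_ isT).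
by have := strict_lower_card_lt lt_zs; lia.
Qed.

Lemma S0_notin o s : s \in S0 o -> s \notin o.
Proof. by rewrite inE => /andP []. Qed.

Lemma S1_in i s : s \in S1 i -> s \in i.
Proof. by rewrite inE => /andP []. Qed.

End FiltersOfPoset.

Section ConvexExpansion.
Variables (d : Order.disp_t) (T : finPOrderType d) (o i : {set T}).
Hypotheses (filter_o : filters T o) (filter_i : filters T i) (sub_io : i \subset o).
Implicit Types B : {set T}.

Lemma filtersK_Some B : filtersK o i (Some @: B) = upK o B.
Proof.
move/upsetP: filter_o => upo; apply/upsetP/andP => [upSB | [/upsetP upB sBo]].
  split.
    by apply/upsetP => x y xB le_xy; rewrite -mem_Some (upSB (Some x)) ?mem_Some.
  apply/subsetP => a aB; apply/negPn/negP => /S0_ge [s s_S0 le_as].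
  apply/(negP (None_notin_Some B)).
  by apply: (upSB (Some a)); rewrite ?mem_Some //; apply/existsP; exists s; rewrite s_S0.
move=> [x|] y; last by rewrite (negbTE (None_notin_Some _)).
rewrite mem_Some => xB; case: y => [y|] /= rxy; first by rewrite mem_Some (upB _ _ xB rxy).
case/existsP: rxy => s /andP [/S0_notin so le_xs].
by rewrite (upo _ _ (subsetP sBo _ xB) le_xs) in so.
Qed.

Lemma filtersK_None B : filtersK o i (None |: Some @: B) = downK i B.
Proof.
move/upsetP: filter_i => upi; apply/upsetP/andP => [upNB | [/upsetP upB siB]].
  split.
    apply/upsetP => x y xB le_xy.
    have : Some y \in None |: Some @: B by rewrite (upNB (Some x)) // !inE mem_Some xB.
    by rewrite in_setU1 mem_Some.
  apply/subsetP => b /S1_le [s s_S1 le_sb].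
  have : Some b \in None |: Some @: B.
    by rewrite (upNB None) ?setU11 //; apply/existsP; exists s; rewrite s_S1.
  by rewrite in_setU1 mem_Some.
move=> x [y|] xNB rxy; rewrite in_setU1 ?eqxx //= mem_Some.
case: x xNB rxy => [x|] /=; first by rewrite in_setU1 mem_Some => /upB; apply.
by move=> _ /existsP [s /andP [/S1_in si le_sy]]; apply: (subsetP siB); apply: upi le_sy.
Qed.

(* A grading of P_K: the elements of 0_K are ranked above x_K, which is
   ranked above every other element of P. *)
Definition rankK (u : option T) : nat :=
  match u with
  | Some a => if a \in o then #|T|.*2.+2 + strict_lower_card a else strict_lower_card a
  | None => #|T|.+1
  end.

Lemma rankK_strict u v : leK o i u v -> u != v -> rankK u < rankK v.
Proof.
move/upsetP: filter_o => upo.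
have lower_card_le (a : T) : strict_lower_card a <= #|T| by apply: max_card.
case: u v => [a|] [b|] //= le_uv neq_uv.
- have lt_ab : (a < b)%O by rewrite lt_neqAle le_uv andbT; apply: contra neq_uv => /eqP ->.
  have := strict_lower_card_lt lt_ab; have := lower_card_le a; have := lower_card_le b.
  case ao: (a \in o); first by rewrite (upo _ _ ao le_uv); lia.
  by case: (b \in o); lia.
- case/existsP: le_uv => s /andP [/S0_notin so le_as].
  case ao: (a \in o); first by rewrite (upo _ _ ao le_as) in so.
  exact: lower_card_le.
- case/existsP: le_uv => s /andP [/S1_in si le_sb].
  by rewrite (upo _ _ (subsetP sub_io _ si) le_sb); lia.
Qed.

Lemma height_filtersK A :
  filtersK o i A -> height (filtersK o i) setT A = #|T|.+1 - #|A|.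
Proof.
rewrite -card_option -cardsT; apply: (height_upsets rankK_strict (c := set0)).
  exact: upsetT.
by move=> X; rewrite sub0set subsetT !andbT.
Qed.

Lemma height_filtersK_None B : downK i B ->
  height (filtersK o i) setT (None |: Some @: B) = height (filters T) setT B.
Proof.
move=> dB; have /andP [fB _] := dB.
by rewrite height_filtersK ?filtersK_None // card_None_Some subSS height_filters.
Qed.

Lemma height_filtersK_Some B : upK o B ->
  height (filtersK o i) setT (Some @: B) = (height (filters T) setT B).+1.
Proof.
move=> uB; have /andP [fB _] := uB.
by rewrite height_filtersK ?filtersK_Some // card_Some height_filters // subSn // max_card.
Qed.

End ConvexExpansion.

Local Open Scope ring_scope.

Theorem proposition1 (d : Order.disp_t) (T : finPOrderType d) (o i : {set T}) :
  is_cutting o i ->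
  (* R(L ⊞ K, x) = R_L(↓K, x) + x R_L(↑K, x) *)
  rgf (filtersK o i) setT (filtersK o i)
    = rgf (filters T) setT (downK i) + 'X * rgf (filters T) setT (upK o)
  /\
  (* R_L(↓K, x) + x R_L(↑K, x) = R(↓K, x) + x^{h_L(0_K)+1} R(↑K, x) *)
  rgf (filters T) setT (downK i) + 'X * rgf (filters T) setT (upK o)
    = rgf (downK i) setT (downK i)
      + 'X^((height (filters T) setT o).+1) * rgf (upK o) o (upK o).
Proof.
move=> [fo [fi [sio _]]]; rewrite /rgf !big_distrr /=; split.
  rewrite (bigID (fun A : {set option T} => None \in A)) /=.
  rewrite reindex_optset_None reindex_optset_Some; congr (_ + _).
    by apply: eq_big => B; rewrite filtersK_None // => dB; rewrite height_filtersK_None.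
  by apply: eq_big => B; rewrite filtersK_Some // => uB; rewrite height_filtersK_Some // exprS.
congr (_ + _); apply: eq_bigr => B BK; first by rewrite height_downK.
by rewrite (height_upK fo BK) -exprS -exprD.
Qed.
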